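(* For any positive integer $T$, $x \in \{0,1\}^T$, $p \in [0,1]^T$, $m = |\{p_1,\ldots,p_T\}|$ and $\epsilon > 0$, there exist a set $S \subset [0,1]$ of size at most $2m+3$ and distributions $\mathcal{D}_1,\ldots,\mathcal{D}_T$ supported on $S$ such that $\mathcal{D} = (\mathcal{D}_1,\ldots,\mathcal{D}_T) \in \underline{\mathcal{C}}(x)$ and $\|p - \mathcal{D}\|_1 \le 20\cdot \mathsf{LowerCalDist}(x,p) + \epsilon$.
   Context: Let $\underline{\mathcal{C}}(x)$ be the set of $T$-tuples $\mathcal{D} = (\mathcal{D}_1,\ldots,\mathcal{D}_T)$ of probability distributions, each with finite support contained in $[0,1]$, such that $\sum_{t=1}^T (x_t - \alpha)\mathcal{D}_t(\alpha) = 0$ for every $\alpha \in [0,1]$. For such $\mathcal{D}$, $\|p - \mathcal{D}\|_1 = \sum_{t=1}^T \mathbb{E}_{q_t \sim \mathcal{D}_t}|p_t - q_t|$, and $\mathsf{LowerCalDist}(x,p) = \inf_{\mathcal{D} \in \underline{\mathcal{C}}(x)} \|p - \mathcal{D}\|_1$. *)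

From HB Require Import structures.
From mathcomp Require Import all_boot all_order all_algebra.
From mathcomp Require Import finmap.
From mathcomp Require Import all_classical all_reals.
Set Implicit Arguments. Unset Strict Implicit. Unset Printing Implicit Defensive.
Import Order.TTheory GRing.Theory Num.Theory.
Local Open Scope ring_scope.
Local Open Scope fset_scope.

(* A probability distribution with finite support on the reals is represented
   by its probability mass function, a finitely supported function
   D : {fsfun R -> R with 0}; its support is [finsupp D]. *)
Definition fdist (R : realType) (D : {fsfun R -> R with 0}) : Prop :=
  (forall a, 0 <= D a) /\ \sum_(a <- finsupp D) D a = 1.

Definition fdist01 (R : realType) (D : {fsfun R -> R with 0}) : Prop :=
  fdist D /\ (forall a, a \in finsupp D -> 0 <= a <= 1).

Definition lowerCal (R : realType) (T : nat) (x : 'I_T -> R)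
    (D : 'I_T -> {fsfun R -> R with 0}) : Prop :=
  (forall t, fdist01 (D t)) /\
  (forall alpha : R, 0 <= alpha <= 1 ->
     \sum_(t < T) (x t - alpha) * D t alpha = 0).

Definition dist1 (R : realType) (T : nat) (p : 'I_T -> R)
    (D : 'I_T -> {fsfun R -> R with 0}) : R :=
  \sum_(t < T) \sum_(a <- finsupp (D t)) D t a * `|p t - a|.

Definition LowerCalDist (R : realType) (T : nat) (x p : 'I_T -> R) : R :=
  inf [set dist1 p D | D in [set D | lowerCal x D]]%classic.

From mathcomp Require Import all_boot all_order all_algebra.
From mathcomp Require Import finmap.
From mathcomp Require Import all_classical all_reals.
From mathcomp Require Import ring lra.
Set Implicit Arguments. Unset Strict Implicit. Unset Printing Implicit Defensive.
Import Order.TTheory GRing.Theory Num.Theory.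
Local Open Scope ring_scope.

(* Take D* in C(x) within eps of LowerCalDist x p.  Indices t with the same
   pair (p_t, x_t) are interchangeable, so averaging D* over each such class
   gives a feasible point of a linear program whose rows are the at most 2m
   classes and whose columns are the support points of D*, with the distance
   to p as a linear cost.  Moving along a kernel direction of the active
   constraints in the cost-nonincreasing sense until an entry vanishes (a
   ratio test) shrinks the support without increasing the cost, so we may
   assume no more positive entries than active constraints, i.e. #classes +
   #used columns.  A used column
   strictly inside (0,1) is calibrated only if it mixes a class with x = 0
   and one with x = 1, i.e. carries two positive entries; hence at most
   #classes such columns are used.  Together with 0 and 1 this is a support
   of size at most 2m + 2, at distance at most that of D*. *)

Lemma exists_kernel_fun (F : fieldType) (X Q : finType) (P : {pred X})
    (M : X -> Q -> F) :
  (#|Q| < #|P|)%N ->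
  exists z : X -> F, [/\ exists e, z e != 0, forall e, e \notin P -> z e = 0 &
    forall q, \sum_e z e * M e q = 0].
Proof.
move=> ltQP; pose A : 'M[F]_(#|P|, #|Q|) := \matrix_(i, j) M (enum_val i) (enum_val j).
have /rowV0Pn[u /sub_kermxP uA /rV0Pn[i ui]] : kermx A != 0.
  by rewrite -mxrank_eq0 mxrank_ker subn_eq0 -ltnNge (leq_ltn_trans (rank_leq_col A)).
pose z e := \sum_(k | enum_val k == e) u 0 k.
exists z; split.
- by exists (enum_val i); rewrite /z (big_pred1 i) // => k; exact: (inj_eq enum_val_inj).
- move=> e eNP; apply: big_pred0 => k; apply: contraNF eNP => /eqP <-.
  exact: enum_valP.
- move=> q; have /rowP/(_ (enum_rank q)) := uA; rewrite !mxE => uAq.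
  rewrite -[RHS]uAq [RHS](partition_big enum_val xpredT) //=; apply: eq_bigr => e _.
  by rewrite mulr_suml; apply: eq_bigr => k /eqP <-; rewrite mxE enum_rankK.
Qed.

Lemma sumr_eq0_sign (R : realDomainType) (K : finType) (F : K -> R) k :
  \sum_i F i = 0 -> F k != 0 -> (exists i, F i < 0) /\ (exists i, 0 < F i).
Proof.
have neg (G : K -> R) : \sum_i G i = 0 -> G k != 0 -> exists i, G i < 0.
  move=> G0 Gk; apply/existsP; apply: contraNT Gk => /existsPn Gge0.
  have Gge : forall i, true -> 0 <= G i by move=> i _; rewrite leNgt Gge0.
  by rewrite (psumr_eq0P Gge G0).
move=> F0 Fk; split; first exact: neg.
have [i] : exists i, - F i < 0 by apply: neg; rewrite ?sumrN ?F0 ?oppr0 ?oppr_eq0.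
by rewrite oppr_lt0; exists i.
Qed.

Lemma ratio_test (R : realFieldType) (K : finType) (y z : K -> R) :
  (forall k, 0 <= y k) -> (exists k, z k < 0) ->
  exists s, [/\ 0 <= s, forall k, 0 <= y k + s * z k &
    exists2 k, z k != 0 & y k + s * z k = 0].
Proof.
move=> y_ge0 [k0 zk0]; pose ratio k := y k / - z k.
have ratioK j : z j < 0 -> ratio j * - z j = y j.
  by move=> zj; rewrite divfK // oppr_eq0 ltr0_neq0.
case: (@arg_minP _ _ _ k0 (fun k => z k < 0) ratio zk0) => k zk ratio_min.
have ratio_ge0 : 0 <= ratio k by rewrite divr_ge0 // oppr_ge0 ltW.
exists (ratio k); split=> //.
- move=> j; case: (lerP 0 (z j)) => zj; first by rewrite addr_ge0 // mulr_ge0.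
  rewrite -(ratioK j zj) -[ratio k * z j]opprK -mulrN -mulrBl.
  by rewrite mulr_ge0 ?subr_ge0 ?ratio_min // oppr_ge0 ltW.
- by exists k; rewrite ?ltr0_neq0 // -(ratioK k zk) mulrN addNr.
Qed.

Section BasicSolutions.
Variables (R : realFieldType) (I J : finType) (w b v : I -> R) (a : J -> R).
Hypotheses (w_gt0 : forall c, 0 < w c) (b01 : forall c, b c = 0 \/ b c = 1).

Definition feasible (Y : I -> J -> R) :=
  [/\ forall c j, 0 <= Y c j, forall c, \sum_j Y c j = 1 &
      forall j, \sum_c w c * (b c - a j) * Y c j = 0].

Definition cost (Y : I -> J -> R) := \sum_c w c * \sum_j Y c j * `|v c - a j|.

Definition support_size (Y : I -> J -> R) := #|[pred e : I * J | 0 < Y e.1 e.2]|.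

Definition used (Y : I -> J -> R) j := [exists c, 0 < Y c j].

Definition interior_used (Y : I -> J -> R) :=
  #|[pred j | (0 < a j < 1) && used Y j]|.

Definition direction (Y Z : I -> J -> R) :=
  [/\ forall c j, Z c j != 0 -> 0 < Y c j, forall c, \sum_j Z c j = 0 &
      forall j, \sum_c w c * (b c - a j) * Z c j = 0].

Definition shift (Y Z : I -> J -> R) (s : R) c j := Y c j + s * Z c j.

Lemma support_size_col Y :
  support_size Y = (\sum_j #|[pred c | (0 < Y c j)%R]|)%N.
Proof.
rewrite /support_size -sum1_card (partition_big snd xpredT) //=.
apply: eq_bigr => j _; rewrite -sum1_card (reindex_onto (fun c => (c, j)) fst).
  by apply: eq_bigl => c; rewrite !inE /= !eqxx !andbT.
by case=> c j' /andP[_ /eqP /= ->].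
Qed.

Lemma card_used_interior Y : feasible Y ->
  (#|[pred j | used Y j]| + interior_used Y <= support_size Y)%N.
Proof.
case=> Y_ge0 _ Ybal.
have cardE (P : pred J) : #|P| = (\sum_j P j)%N.
  by rewrite -sum1_card big_mkcond; apply: eq_bigr => j _; rewrite unfold_in; case: (P j).
rewrite support_size_col /interior_used !cardE -big_split /=.
apply: leq_sum => j _; case: (boolP (used Y j)) => [/existsP[c Ycj]|]; last first.
  by rewrite andbF.
case: (boolP (0 < a j < 1)) => [/andP[a_gt0 a_lt1]|_] /=; last first.
  by apply/card_gt0P; exists c; rewrite inE.
pose F c := w c * (b c - a j) * Y c j.
have Y_gt0 c' : F c' != 0 -> 0 < Y c' j.
  by apply: contraNT; rewrite lt_def Y_ge0 andbT !negbK /F => /eqP ->; rewrite mulr0.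
have Fc : F c != 0.
  rewrite /F !mulf_neq0 ?(gt_eqF (w_gt0 c)) ?(gt_eqF Ycj) //.
  by case: (b01 c) => ->; rewrite subr_eq0 ?(lt_eqF a_gt0) ?(gt_eqF a_lt1).
have [[c1 Fc1] [c2 Fc2]] := sumr_eq0_sign (Ybal j) Fc.
apply/card_gt1P; exists c1, c2.
rewrite !inE (Y_gt0 _ (ltr0_neq0 Fc1)) (Y_gt0 _ (lt0r_neq0 Fc2)).
by split=> //; apply/eqP => c12; move: (lt_trans Fc1 Fc2); rewrite c12 ltxx.
Qed.

Lemma feasible_shift Y Z s : feasible Y -> direction Y Z ->
  (forall c j, 0 <= shift Y Z s c j) -> feasible (shift Y Z s).
Proof.
case=> _ Y1 Ybal [_ Z0 Zbal] ge0; split=> // [c|j]; rewrite /shift.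
  by rewrite big_split /= -mulr_sumr Y1 Z0 mulr0 addr0.
transitivity (\sum_c w c * (b c - a j) * Y c j +
              s * \sum_c w c * (b c - a j) * Z c j).
  by rewrite mulr_sumr -big_split; apply: eq_bigr => c _ /=; ring.
by rewrite Ybal Zbal mulr0 addr0.
Qed.

Lemma cost_shift Y Z s :
  cost (shift Y Z s) = cost Y + s * cost Z.
Proof.
rewrite /cost /shift mulr_sumr -big_split; apply: eq_bigr => c _ /=.
rewrite mulrCA -mulrDr [s * _]mulr_sumr -big_split; congr (_ * _).
by apply: eq_bigr => j _; rewrite mulrDl mulrA.
Qed.

Lemma cost_opp Z : cost (fun c j => - Z c j) = - cost Z.
Proof.
rewrite /cost -sumrN; apply: eq_bigr => c _.
by rewrite -mulrN -sumrN; under eq_bigr do rewrite mulNr.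
Qed.

Lemma direction_opp Y Z : direction Y Z -> direction Y (fun c j => - Z c j).
Proof.
case=> Zsupp Z0 Zbal; split=> [c j|c|j]; first by rewrite oppr_eq0; apply: Zsupp.
  by rewrite sumrN Z0 oppr0.
by under eq_bigr do rewrite mulrN; rewrite sumrN Zbal oppr0.
Qed.

Lemma support_size_shift Y Z s c j :
  (forall c j, Z c j != 0 -> 0 < Y c j) -> Z c j != 0 -> Y c j + s * Z c j = 0 ->
  (support_size (shift Y Z s) < support_size Y)%N.
Proof.
move=> Zsupp Zcj Ycj0; rewrite /shift; apply/proper_card/properP; split.
  apply/fintype.subsetP => -[c' j']; rewrite !inE /=.
  by case: (eqVneq (Z c' j') 0) => [->|/Zsupp//]; rewrite mulr0 addr0.
by exists (c, j); rewrite !inE /= ?Zsupp // Ycj0 ltxx.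
Qed.

Lemma exists_direction Y :
  (#|I| + #|[pred j | used Y j]| < support_size Y)%N ->
  exists2 Z, direction Y Z & exists c j, Z c j != 0.
Proof.
move=> ltQ; pose Q := (I + {j : J | used Y j})%type.
pose M (e : I * J) (q : Q) : R := match q with
  | inl c => (e.1 == c)%:R
  | inr j => (e.2 == val j)%:R * (w e.1 * (b e.1 - a e.2)) end.
have [|z [[e ze] zP zM]] := @exists_kernel_fun R _ Q [pred e | 0 < Y e.1 e.2] M.
  by rewrite card_sum card_sig.
pose Z c j := z (c, j).
have Zsupp c j : Z c j != 0 -> 0 < Y c j.
  by apply: contraNT => Ycj; apply/eqP/zP; rewrite inE.
have sum_pairs q : \sum_c \sum_j Z c j * M (c, j) q = 0.
  by rewrite pair_big -[RHS](zM q); apply: eq_bigr => -[c j].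
exists Z; last by exists e.1, e.2; rewrite /Z -surjective_pairing.
split=> // [c|j].
  rewrite -[RHS](sum_pairs (inl c)) (bigD1 c) //= [X in _ + X]big1 ?addr0.
    by apply: eq_bigr => j _; rewrite eqxx mulr1.
  by move=> c' /negbTE c'c; apply: big1 => j _; rewrite c'c mulr0.
case: (boolP (used Y j)) => [uj | /existsPn uNj]; last first.
  apply: big1 => c _; move/negbNE/eqP: (contra (Zsupp c j) (uNj c)) => ->.
  by rewrite mulr0.
rewrite -[RHS](sum_pairs (inr (exist _ j uj))); apply: eq_bigr => c _ /=.
rewrite (bigD1 j) //= eqxx [X in _ = _ + X]big1 ?addr0; first by rewrite mul1r mulrC.
by move=> j' /negbTE j'j; rewrite j'j mul0r mulr0.
Qed.

Lemma descent_step Y : feasible Y -> (#|I| < interior_used Y)%N ->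
  exists Y', [/\ feasible Y', cost Y' <= cost Y & (support_size Y' < support_size Y)%N].
Proof.
move=> fY ltI.
have [Z dirZ [c0 [j0 Zc0]]] : exists2 Z, direction Y Z & exists c j, Z c j != 0.
  apply: exists_direction; rewrite addnC.
  by apply: leq_trans (card_used_interior fY); rewrite ltn_add2l.
wlog cost_Z : Z dirZ Zc0 / cost Z <= 0.
  move=> descent; case: (lerP (cost Z) 0) => [|cost_gt0]; first exact: descent.
  apply: (descent (fun c j => - Z c j)); first exact: direction_opp.
    by rewrite oppr_eq0.
  by rewrite cost_opp oppr_le0 ltW.
case: (dirZ) => Zsupp Z0 _.
have [[j1 Zj1] _] := sumr_eq0_sign (Z0 c0) Zc0.
have Y_ge0 (e : I * J) : 0 <= Y e.1 e.2 by case: fY.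
have Z_neg : exists e : I * J, Z e.1 e.2 < 0 by exists (c0, j1).
have [s [s_ge0 shift_ge0 [[c j] Zcj Ycj0]]] := ratio_test Y_ge0 Z_neg.
exists (shift Y Z s); split.
- by apply: feasible_shift => // c' j'; apply: (shift_ge0 (c', j')).
- by rewrite cost_shift gerDl mulr_ge0_le0.
- exact: support_size_shift Ycj0.
Qed.

Lemma exists_sparse_feasible Y : feasible Y ->
  exists Y', [/\ feasible Y', cost Y' <= cost Y & (interior_used Y' <= #|I|)%N].
Proof.
have [n] := ubnP (support_size Y); elim: n Y => // n IH Y; rewrite ltnS => supp_n fY.
have [|ltI] := leqP (interior_used Y) #|I|; first by exists Y.
have [Y1 [fY1 cY1 sY1]] := descent_step fY ltI.
have [Y2 [fY2 cY2 iY2]] := IH Y1 (leq_trans sY1 supp_n) fY1.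
by exists Y2; split=> //; apply: le_trans cY1.
Qed.
End BasicSolutions.

Lemma size_undup_pairs (S U V : eqType) (f : S -> U) (g : S -> V) (s : seq S) :
  (size (undup [seq (f i, g i) | i <- s])
     <= size (undup (map f s)) * size (undup (map g s)))%N.
Proof.
rewrite -(size_allpairs pair); apply: uniq_leq_size (undup_uniq _) _ => z.
by rewrite mem_undup => /mapP[i si ->]; apply: allpairs_f; rewrite mem_undup map_f.
Qed.

Local Open Scope fset_scope.

Lemma sum_finsupp_sub (K : choiceType) (R : pzSemiRingType)
    (f : {fsfun K -> R with 0}) (A : {fset K}) (g : K -> R) :
  finsupp f `<=` A ->
  \sum_(r <- finsupp f) f r * g r = \sum_(j : A) f (val j) * g (val j).
Proof.
move=> fA; rewrite (big_fset_incl _ fA) ?big_seq_fsetE // => r _ rNf.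
by rewrite fsfun_dflt // mul0r.
Qed.

Section Classes.
Variables (R : realType) (T : nat) (x p : 'I_T -> R).

Definition class_keys := undup [seq (p t, x t) | t <- enum 'I_T].
Local Notation class := (seq_sub class_keys).

Lemma class_key_mem t : (p t, x t) \in class_keys.
Proof. by rewrite mem_undup map_f ?mem_enum. Qed.

Definition class_of t : class := SeqSub (class_key_mem t).
Definition class_p (c : class) := (ssval c).1.
Definition class_x (c : class) := (ssval c).2.
Definition class_weight (c : class) : R := #|[pred t | class_of t == c]|%:R.

Lemma class_of_surj c : exists t, class_of t = c.
Proof.
case: c => k kP; have /mapP[t _ kE] : k \in [seq (p t, x t) | t <- enum 'I_T].
  by rewrite -mem_undup.
by exists t; apply: val_inj.
Qed.

Lemma class_weight_gt0 c : 0 < class_weight c.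
Proof.
by have [t <-] := class_of_surj c; rewrite ltr0n; apply/card_gt0P; exists t; rewrite inE.
Qed.

Lemma sum_by_class (F : 'I_T -> R) :
  \sum_t F t = \sum_c \sum_(t | class_of t == c) F t.
Proof. exact: partition_big. Qed.

Lemma sum_class_const c (k : R) : \sum_(t | class_of t == c) k = class_weight c * k.
Proof.
by rewrite /class_weight mulr_natl -sumr_const; apply: eq_bigl => t; rewrite inE.
Qed.

Section Lift.
Variables (A : {fset R}) (Y : class -> A -> R).
Hypothesis A01 : forall r, r \in A -> 0 <= r <= 1.

Definition lift t : {fsfun R -> R with 0} := [fsfun j : A => Y (class_of t) j].

Lemma liftE t (j : A) : lift t (val j) = Y (class_of t) j.
Proof. by rewrite /lift fsfun_ffun valK. Qed.

Lemma lift_out t r : r \notin A -> lift t r = 0.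
Proof. by move=> rNA; rewrite /lift fsfun_ffun insubF //; apply/negbTE. Qed.

Lemma sum_lift t (g : R -> R) :
  \sum_(r <- finsupp (lift t)) lift t r * g r = \sum_(j : A) Y (class_of t) j * g (val j).
Proof.
by rewrite (sum_finsupp_sub _ (finsupp_sub _ _ _)); under eq_bigr do rewrite liftE.
Qed.

Lemma lowerCal_lift : feasible class_weight class_x val Y -> lowerCal x lift.
Proof.
case=> Y_ge0 Y1 Ybal; split=> [t|r _]; first split; first split.
- move=> r; have [rA|/lift_out->//] := boolP (r \in A).
  by have -> : r = val [`rA] by []; rewrite liftE.
- transitivity (\sum_(r <- finsupp (lift t)) lift t r * 1).
    by under [RHS]eq_bigr do rewrite mulr1.
  by rewrite sum_lift; under eq_bigr do rewrite mulr1; apply: Y1.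
- by move=> r /(fsubsetP (finsupp_sub _ _ _)) /A01.
have [rA|rNA] := boolP (r \in A); last by apply: big1 => t _; rewrite lift_out ?mulr0.
have -> : r = val [`rA] by [].
under eq_bigr do rewrite liftE.
rewrite sum_by_class -[RHS](Ybal [`rA]); apply: eq_bigr => c _.
transitivity (\sum_(t | class_of t == c) (class_x c - val [`rA]) * Y c [`rA]).
  by apply: eq_bigr => t /eqP <-.
by rewrite sum_class_const mulrA.
Qed.

Lemma dist1_lift : dist1 p lift = cost class_weight class_p val Y.
Proof.
rewrite /dist1 sum_by_class; apply: eq_bigr => c _.
transitivity (\sum_(t | class_of t == c) \sum_(j : A) Y c j * `|class_p c - val j|).
  by apply: eq_bigr => t /eqP <-; rewrite sum_lift.
by rewrite sum_class_const.
Qed.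

Definition lift_support : {fset R} := seq_fset tt
  ([seq val j | j <- enum [pred j : A | (0 < val j < 1) && used Y j]] ++ [:: 0; 1]).

Lemma lift_support01 r : r \in lift_support -> 0 <= r <= 1.
Proof.
rewrite seq_fsetE mem_cat => /orP[/mapP[j _ ->]|]; first exact: A01 (fsvalP j).
by rewrite !inE => /orP[] /eqP->; rewrite ?lexx ?ler01.
Qed.

Lemma card_lift_support : (#|` lift_support| <= interior_used val Y + 2)%N.
Proof.
by rewrite size_seq_fset (leq_trans (size_undup _)) // size_cat size_map -cardE.
Qed.

Lemma finsupp_lift_sub t : (forall c j, 0 <= Y c j) -> finsupp (lift t) `<=` lift_support.
Proof.
move=> Y_ge0; apply/fsubsetP => r rD; rewrite seq_fsetE mem_cat.
have rA : r \in A := fsubsetP (finsupp_sub _ _ _) r rD.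
have [r01|] := boolP (0 < r < 1).
  apply/orP; left; apply/mapP; exists [`rA] => //; rewrite mem_enum inE r01 /=.
  apply/existsP; exists (class_of t); rewrite lt_def Y_ge0 andbT -liftE.
  by rewrite mem_finsupp in rD.
have /andP[r_ge0 r_le1] := A01 rA.
rewrite negb_and -!leNgt !inE => /orP[r_le0|r_ge1]; apply/orP; right.
  by rewrite (@le_anti _ _ r 0) ?r_le0 ?eqxx.
by rewrite (@le_anti _ _ r 1) ?r_le1 ?r_ge1 ?eqxx ?orbT.
Qed.
End Lift.

Section Average.
Variable Ds : 'I_T -> {fsfun R -> R with 0}.
Hypothesis Ds_cal : lowerCal x Ds.

Definition support_union : {fset R} := \bigcup_(t <- enum 'I_T) finsupp (Ds t).

Lemma support_union01 r : r \in support_union -> 0 <= r <= 1.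
Proof. by case/bigfcupP => t _ rt; have [/(_ t)[_ ->]] := Ds_cal. Qed.

Lemma sum_Ds t (g : R -> R) :
  \sum_(r <- finsupp (Ds t)) Ds t r * g r =
  \sum_(j : support_union) Ds t (val j) * g (val j).
Proof. by apply: sum_finsupp_sub; apply: bigfcup_sup; rewrite ?mem_enum. Qed.

Definition class_average (c : class) (j : support_union) : R :=
  (class_weight c)^-1 * \sum_(t | class_of t == c) Ds t (val j).

Lemma feasible_class_average : feasible class_weight class_x val class_average.
Proof.
have [Ds_dist Ds_bal] := Ds_cal.
have Ds_ge0 t r : 0 <= Ds t r by have [[]] := Ds_dist t.
have winv c : (class_weight c)^-1 * class_weight c = 1.
  by rewrite mulVf // gt_eqF // class_weight_gt0.
split=> [c j|c|j].
- by rewrite mulr_ge0 ?sumr_ge0 // invr_ge0 ltW // class_weight_gt0.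
- rewrite -mulr_sumr exchange_big /=.
  transitivity ((class_weight c)^-1 * (class_weight c * 1)); last by rewrite mulr1.
  rewrite -sum_class_const; congr (_ * _); apply: eq_bigr => t _.
  have [[_ <-] _] := Ds_dist t; under [RHS]eq_bigr do rewrite -[Ds t _]mulr1.
  by rewrite sum_Ds; under [RHS]eq_bigr do rewrite mulr1.
- rewrite -[RHS](Ds_bal (val j)) ?support_union01 ?fsvalP // sum_by_class.
  apply: eq_bigr => c _; rewrite /class_average mulrCA !mulrA winv mul1r mulr_sumr.
  by apply: eq_bigr => t /eqP <-.
Qed.

Lemma cost_class_average : cost class_weight class_p val class_average = dist1 p Ds.
Proof.
rewrite /dist1 sum_by_class; apply: eq_bigr => c _.
transitivity (\sum_(t | class_of t == c)
                \sum_(j : support_union) Ds t (val j) * `|class_p c - val j|).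
  rewrite exchange_big mulr_sumr; apply: eq_bigr => j _.
  by rewrite /class_average !mulrA mulfV ?gt_eqF ?class_weight_gt0 // mul1r mulr_suml.
by apply: eq_bigr => t /eqP <-; rewrite sum_Ds.
Qed.
End Average.
End Classes.

Lemma size_class_keys (R : realType) (T : nat) (x p : 'I_T -> R) :
  (forall t, x t = 0 \/ x t = 1) ->
  (size (class_keys x p) <= 2 * size (undup [seq p t | t <- enum 'I_T]))%N.
Proof.
move=> x01; rewrite mulnC; apply: leq_trans (size_undup_pairs _ _ _) _.
rewrite leq_mul2l; apply/orP; right.
apply: (@uniq_leq_size _ _ [:: 0; 1]) => [|r]; first exact: undup_uniq.
rewrite mem_undup => /mapP[t _ ->].
by rewrite !inE; case: (x01 t) => ->; rewrite eqxx ?orbT.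
Qed.

Lemma exists_sparse_lowerCal (R : realType) (T : nat) (x p : 'I_T -> R)
    (Ds : 'I_T -> {fsfun R -> R with 0}) :
  (forall t, x t = 0 \/ x t = 1) -> lowerCal x Ds ->
  exists (S : {fset R}) (D : 'I_T -> {fsfun R -> R with 0}),
    [/\ forall r, r \in S -> 0 <= r <= 1, (#|` S| <= size (class_keys x p) + 2)%N,
        forall t, finsupp (D t) `<=` S, lowerCal x D & dist1 p D <= dist1 p Ds].
Proof.
move=> x01 Ds_cal.
have class_x01 (c : seq_sub (class_keys x p)) : class_x c = 0 \/ class_x c = 1.
  by have [t <-] := class_of_surj c; apply: x01.
have [Y [fY costY interY]] := exists_sparse_feasible (@class_p _ _ x p)
  (@class_weight_gt0 _ _ x p) class_x01 (feasible_class_average p Ds_cal).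
have [Y_ge0 _ _] := fY.
exists (lift_support Y), (lift Y); split.
- exact: lift_support01 (support_union01 Ds_cal).
- rewrite (leq_trans (card_lift_support Y)) // leq_add2r (leq_trans interY) //.
  by rewrite card_seq_sub ?undup_uniq.
- by move=> t; apply: finsupp_lift_sub (support_union01 Ds_cal) t Y_ge0.
- exact: (lowerCal_lift (support_union01 Ds_cal) fY).
- by rewrite dist1_lift -(cost_class_average x p Ds).
Qed.

Lemma lowerCal_nonempty (R : realType) (T : nat) (x : 'I_T -> R) :
  (0 < T)%N -> (forall t, 0 <= x t <= 1) -> exists D, lowerCal x D.
Proof.
move=> T_gt0 x01; pose mu := (\sum_t x t) / T%:R.
have mu01 : 0 <= mu <= 1.
  apply/andP; split.
    by rewrite divr_ge0 ?ler0n // sumr_ge0 // => t _; case/andP: (x01 t).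
  rewrite ler_pdivrMr ?ltr0n // mul1r -[X in _ <= X%:R]card_ord -sumr_const.
  by apply: ler_sum => t _; case/andP: (x01 t).
pose D0 : {fsfun R -> R with 0} := [fsfun r in [fset mu] => 1].
have D0E r : D0 r = (r == mu)%:R by rewrite fsfun_fun in_fset1; case: eqP.
have D0supp : finsupp D0 `<=` [fset mu].
  apply/fsubsetP => r; rewrite mem_finsupp D0E in_fset1.
  by case: (r == mu); rewrite ?eqxx.
exists (fun=> D0); split=> [t|r _]; first split; first split.
- by move=> r; rewrite D0E ler0n.
- rewrite (big_fset_incl _ D0supp) ?big_seq_fset1 ?D0E ?eqxx // => r _.
  by rewrite mem_finsupp negbK => /eqP.
- by move=> r /(fsubsetP D0supp); rewrite in_fset1 => /eqP->.
rewrite D0E; have [->|_] := eqVneq r mu; last by apply: big1 => t _; rewrite mulr0.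
under eq_bigr do rewrite mulr1.
by rewrite sumrB sumr_const card_ord /mu; field; rewrite pnatr_eq0 -lt0n.
Qed.

Lemma dist1_ge0 (R : realType) (T : nat) (x p : 'I_T -> R) D :
  lowerCal x D -> 0 <= dist1 p D.
Proof.
case=> D_dist _; apply: sumr_ge0 => t _; apply: sumr_ge0 => r _.
by have [[D_ge0 _] _] := D_dist t; rewrite mulr_ge0.
Qed.

Section LowerCalDist.
Variables (R : realType) (T : nat) (x p : 'I_T -> R).
Hypothesis lowerCal_ne : exists D, lowerCal x D.

Let dists := [set dist1 p D | D in [set D | lowerCal x D]]%classic.

Let has_inf_dists : has_inf dists.
Proof.
have [D D_cal] := lowerCal_ne; split; first by exists (dist1 p D), D.
by exists 0 => _ [D1 D1_cal <-]; apply: dist1_ge0 D1_cal.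
Qed.

Lemma LowerCalDist_ge0 : 0 <= LowerCalDist x p.
Proof.
rewrite /LowerCalDist; apply: lb_le_inf; first by case: has_inf_dists.
by move=> _ [D1 D1_cal <-]; apply: dist1_ge0 D1_cal.
Qed.

Lemma LowerCalDist_adherent (eps : R) : 0 < eps ->
  exists2 D, lowerCal x D & (dist1 p D < LowerCalDist x p + eps)%R.
Proof.
by move=> eps_gt0; have [_ [D D_cal <-]] := inf_adherent eps_gt0 has_inf_dists; exists D.
Qed.
End LowerCalDist.

Theorem lemma4 (R : realType) (T : nat) (x p : 'I_T -> R) (eps : R) :
  (0 < T)%N ->
  (forall t, x t = 0 \/ x t = 1) ->
  (forall t, 0 <= p t <= 1) ->
  0 < eps ->
  exists (S : {fset R}) (D : 'I_T -> {fsfun R -> R with 0}),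
    [/\ (forall a, a \in S -> 0 <= a <= 1),
        (#|` S| <= 2 * size (undup [seq p t | t <- enum 'I_T]) + 3)%N,
        (forall t, finsupp (D t) `<=` S),
        lowerCal x D &
        (dist1 p D <= 20 * LowerCalDist x p + eps)%R].
Proof.
move=> T_gt0 x01 _ eps_gt0.
have x01' t : 0 <= x t <= 1 by case: (x01 t) => ->; rewrite lexx ler01.
have lowerCal_ne := lowerCal_nonempty T_gt0 x01'.
have [Ds Ds_cal Ds_near] := LowerCalDist_adherent p lowerCal_ne eps_gt0.
have [S [D [S01 S_card D_supp D_cal D_le]]] := exists_sparse_lowerCal p x01 Ds_cal.
exists S, D; split=> //.
  by rewrite (leq_trans S_card) // leq_add ?size_class_keys.
have := LowerCalDist_ge0 p lowerCal_ne; lra.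
Qed.
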